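(* Let $n,m\ge1$ and $\alpha^1,\dots,\alpha^n,\beta^1,\dots,\beta^m\in\mathrm{ord}$. 1. If $\alpha^i<\alpha^1,\dots,\alpha^n,\beta^1,\dots,\beta^m$ for every $i\in\{1,\dots,n\}$, then $\alpha^i<\beta^1,\dots,\beta^m$ for every $i$. 2. Let $F_1\subseteq_f I_{\alpha^1},\dots,F_n\subseteq_f I_{\alpha^n}$. If $\alpha^i\le\alpha^1_{F_1},\dots,\alpha^n_{F_n},\beta^1,\dots,\beta^m$ for every $i\in\{1,\dots,n\}$, then $\alpha^i\le\beta^1,\dots,\beta^m$ for every $i$.
   Context: Work constructively. Let $\mathfrak F$ be a set of index sets containing $\mathbb N$ and each $\mathbb N_k=\{n\in\mathbb N:n<k\}$ ($k\ge0$), closed (up to isomorphism) under finitely enumerated subsets, sets of finitely enumerated subsets, and disjoint unions indexed by elements of $\mathfrak F$. A finitely enumerated subset of $A$ is one given by a map $\mathbb N_k\to A$; write $F\subseteq_f I$. The set $\mathrm{ord}$ is inductively generated by $\underline 0$ and, for every family $(\alpha_i)_{i\in I}$ with $I\in\mathfrak F$, $\alpha_i\in\mathrm{ord}$, an element $\mathrm S(\alpha_i)_{i\in I}$; for such $\alpha$, $I_\alpha=I$ and $\alpha_i$ are its definitional subordinals; $I_{\underline 0}=\emptyset$. For a finite list $F$ in $I_\alpha$, $\alpha_F$ is the list of the $\alpha_i$, $i\in F$. Relations between an element and a nonempty finite list, by simultaneous induction: $\alpha\le\beta^1,\dots,\beta^m$ means $\alpha_i<\beta^1,\dots,\beta^m$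 for all $i\in I_\alpha$; $\alpha<\beta^1,\dots,\beta^m$ means there exist $F_1\subseteq_f I_{\beta^1},\dots,F_m\subseteq_f I_{\beta^m}$, not all empty, with $\alpha\le\beta^1_{F_1},\dots,\beta^m_{F_m}$ (concatenated list). *)

From mathcomp Require Import all_boot.
Set Implicit Arguments. Unset Strict Implicit.

Definition iso (A B : Type) : Prop :=
  exists (f : A -> B) (g : B -> A), cancel f g /\ cancel g f.

(* A finitely enumerated subset of A: a map N_k -> A (N_k = 'I_k). *)
Record finenum (A : Type) := FinEnum { fe_size : nat; fe_map : 'I_fe_size -> A }.

(* The set \mathfrak F of index sets: codes [idx] with elements [el i],
   containing N and every N_k, closed up to isomorphism under finitely
   enumerated subsets, sets of finitely enumerated subsets and disjoint
   unions indexed by elements of \mathfrak F. *)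
Record IndexFamily := {
  idx : Type;
  el : idx -> Type;
  has_nat : exists i, iso (el i) nat;
  has_Nk : forall k, exists i, iso (el i) 'I_k;
  cl_finsub : forall (i : idx) (F : finenum (el i)),
      exists j, iso (el j) {x : el i | exists n, @fe_map _ F n = x};
  cl_setfinsub : forall i : idx, exists j, iso (el j) (finenum (el i));
  cl_sigma : forall (i : idx) (J : el i -> idx),
      exists j, iso (el j) {x : el i & el (J x)}
}.

Section Ord.
Variable FF : IndexFamily.

Inductive ord : Type :=
| ordZ : ord
| ordS : forall J : @idx FF, (@el FF J -> ord) -> ord.

Definition ord_idx (a : ord) : Type :=
  match a with ordZ => Empty_set | ordS J _ => @el FF J end.

Definition ord_sub (a : ord) : ord_idx a -> ord :=
  match a as a0 return ord_idx a0 -> ord with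
  | ordZ => fun e => match e with end
  | ordS _ f => f
  end.

Definition ord_subF (a : ord) (F : finenum (ord_idx a)) : seq ord :=
  map (fun n => ord_sub (@fe_map _ F n)) (enum 'I_(fe_size F)).

(* a choice of F_1 ⊆_f I_{b^1}, ..., F_m ⊆_f I_{b^m} for the list bs *)
Fixpoint subchoice (bs : seq ord) : Type :=
  match bs with
  | [::] => unit
  | b :: bs' => (finenum (ord_idx b) * subchoice bs')%type
  end.

Fixpoint subselect (bs : seq ord) : subchoice bs -> seq ord :=
  match bs as bs0 return subchoice bs0 -> seq ord with
  | [::] => fun _ => [::]
  | b :: bs' => fun c => ord_subF c.1 ++ subselect c.2
  end.

Fixpoint subchoice_nonempty (bs : seq ord) : subchoice bs -> Prop :=
  match bs as bs0 return subchoice bs0 -> Prop with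
  | [::] => fun _ => False
  | b :: bs' => fun c => 0 < fe_size c.1 \/ subchoice_nonempty c.2
  end.

(* alpha <= bs  :  alpha_i < bs for all i in I_alpha, where
   alpha_i < bs  :  exists F_1..F_m not all empty with alpha_i <= bs_F *)
Fixpoint ord_le (a : ord) (bs : seq ord) {struct a} : Prop :=
  match a with
  | ordZ => True
  | ordS J f => forall i : @el FF J,
      exists c : subchoice bs, subchoice_nonempty c /\ ord_le (f i) (subselect c)
  end.

Definition ord_lt (a : ord) (bs : seq ord) : Prop :=
  exists c : subchoice bs, subchoice_nonempty c /\ ord_le a (subselect c).

End Ord.

From mathcomp Require Import all_boot.
From Stdlib Require List.
Set Implicit Arguments. Unset Strict Implicit.

(* [a <= L] only depends on the set of members of [L], is monotone in it, and
   admits substitution: if [a <= D, L] and [d <= N] for every [d] in [D], then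
   [a <= N, L].  Part 2 then goes by well-founded induction on [alphas] along
   the relation "is a nonempty list of definitional subordinals of": every
   member [p] of [alpha_F] is a subordinal of some [alpha^i], so
   [p <= alpha_F', betas] for a common [F'] selected from [alpha_F]; by
   induction [p <= betas], and substituting into [alpha^i <= alpha_F, betas]
   gives [alpha^i <= betas].  Part 1 reduces to part 2 by merging the
   witnesses of all [alpha^i < alphas, betas] into one selection from
   [alphas, betas]: its part selected from [betas] cannot be empty, since no
   ordinal with a subordinal is [<=] the empty list. *)

Local Notation In := List.In.
Local Notation incl := List.incl.

Lemma in_cat (T : Type) (x : T) (s t : seq T) : In x (s ++ t) <-> In x s \/ In x t.
Proof. exact: List.in_app_iff. Qed.

Lemma incl_neq_nil (T : Type) (s t : seq T) : incl s t -> s <> [::] -> t <> [::].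
Proof. by move=> incl_st s_ne t_nil; apply/s_ne/List.incl_l_nil; rewrite -t_nil. Qed.

Lemma incl_catC (T : Type) (s t : seq T) : incl (s ++ t) (t ++ s).
Proof. by move=> x; rewrite !in_cat; tauto. Qed.

Lemma neq_nil_size (T : Type) (s : seq T) : s <> [::] <-> 0 < size s.
Proof. by case: s. Qed.

Lemma forall_nthP (T : Type) (x0 : T) (s : seq T) (P : T -> Prop) :
  (forall i, i < size s -> P (nth x0 s i)) <-> (forall x, In x s -> P x).
Proof.
elim: s => [|y s IH] /=; first by split=> // _ x [].
split=> [Ps x [<-|x_s] | Ps [|i] /= lt_i_s]; first exact: (Ps 0).
- exact: (proj1 IH (fun i => Ps i.+1)).
- by apply: Ps; left.
- by apply: (proj2 IH) => // x x_s; apply: Ps; right.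
Qed.

Section OrdLe.
Variable FF : IndexFamily.
Local Notation ord := (ord FF).
Local Notation ord_sub := (@ord_sub FF _).

Inductive selection : seq ord -> seq ord -> Prop :=
| selection_nil : selection [::] [::]
| selection_cons (b : ord) L S (xs : seq (ord_idx b)) :
    selection L S -> selection (b :: L) (map ord_sub xs ++ S).

Lemma selection0 L : selection L [::].
Proof.
by elim: L => [|b L sel0]; [constructor | exact: (@selection_cons b L [::] [::])].
Qed.

Lemma selection_nil_inv S : selection [::] S -> S = [::].
Proof. by move=> selS; inversion selS. Qed.

Lemma selection_cons_inv b L S : selection (b :: L) S ->
  exists (xs : seq (ord_idx b)) T, selection L T /\ S = map ord_sub xs ++ T.
Proof.
move=> selS; remember (b :: L) as bL eqn:def_bL.
case: selS def_bL => // b' L' T xs selT [eq_b eq_L]; subst b' L'.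
by exists xs, T.
Qed.

Lemma selection_cat L1 L2 S1 S2 :
  selection L1 S1 -> selection L2 S2 -> selection (L1 ++ L2) (S1 ++ S2).
Proof. by elim=> //= b L S xs _ IH sel2; rewrite -catA; constructor; exact: IH. Qed.

Lemma selection_cat_inv L1 L2 S : selection (L1 ++ L2) S ->
  exists S1 S2, [/\ selection L1 S1, selection L2 S2 & S = S1 ++ S2].
Proof.
elim: L1 S => [|b L1 IH] S /= selS; first by exists [::], S; split=> //; constructor.
have [xs [T [selT ->]]] := selection_cons_inv selS.
have [S1 [S2 [sel1 sel2 ->]]] := IH _ selT.
by exists (map ord_sub xs ++ S1), S2; rewrite catA; split=> //; constructor.
Qed.

Lemma selection_In L S s : selection L S -> In s S ->
  exists2 b, In b L & exists x : ord_idx b, s = ord_sub x.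
Proof.
elim=> //= b L' S' xs _ IH /in_cat [/List.in_map_iff [x [<- _]] | /IH [c c_L' sub_c]].
  by exists b; [left | exists x].
by exists c; [right |].
Qed.

Lemma selection_union L S1 S2 : selection L S1 -> selection L S2 ->
  exists2 S, selection L S & incl (S1 ++ S2) S.
Proof.
elim: L S1 S2 => [|b L IH] S1 S2 sel1 sel2.
  rewrite (selection_nil_inv sel1) (selection_nil_inv sel2).
  by exists [::]; [constructor | exact: List.incl_refl].
have [xs1 [T1 [selT1 ->]]] := selection_cons_inv sel1.
have [xs2 [T2 [selT2 ->]]] := selection_cons_inv sel2.
have [T selT inclT] := IH _ _ selT1 selT2.
exists (map ord_sub (xs1 ++ xs2) ++ T); first by constructor.
move=> z; have := inclT z; rewrite map_cat !in_cat; tauto.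
Qed.

Lemma selection_single L b : In b L -> forall xs : seq (ord_idx b),
  exists2 S, selection L S & incl (map ord_sub xs) S.
Proof.
elim: L => [|c L IH] //= [<- | b_L] xs.
  exists (map ord_sub xs ++ [::]); first by constructor; exact: selection0.
  by rewrite cats0; exact: List.incl_refl.
have [S selS inclS] := IH b_L xs.
by exists S => //; exact: (@selection_cons c L S [::]).
Qed.

Lemma selection_incl L M S : selection L S -> incl L M ->
  exists2 S', selection M S' & incl S S'.
Proof.
elim=> [|b L' S0 xs _ IH] inclLM.
  by exists [::]; [exact: selection0 | exact: List.incl_refl].
have [b_M inclL'M] := List.incl_cons_inv inclLM.
have [S1 sel1 incl1] := IH inclL'M.
have [S2 sel2 incl2] := selection_single b_M xs.
have [S' selS' inclS'] := selection_union sel2 sel1.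
by exists S' => //; apply: List.incl_tran inclS'; exact: List.incl_app_app.
Qed.

Lemma selection_collect (R : ord -> seq ord -> Prop) L Q :
    (forall q S S', R q S -> incl S S' -> R q S') ->
    (forall q, In q Q -> exists2 S, selection L S & R q S) ->
  exists2 S, selection L S & forall q, In q Q -> R q S.
Proof.
move=> R_incl; elim: Q => [|q Q IH] RQ; first by exists [::] => //; exact: selection0.
have [Sq selSq Rq] := RQ q (or_introl erefl).
have [SQ selSQ RSQ] := IH (fun q' q'Q => RQ q' (or_intror q'Q)).
have [S selS /List.incl_app_inv [inclSq inclSQ]] := selection_union selSq selSQ.
exists S => // q' [<- | q'Q].
  exact: R_incl Rq inclSq.
exact: R_incl (RSQ q' q'Q) inclSQ.
Qed.

Lemma selectionP L S : selection L S <-> exists c : subchoice L, subselect c = S.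
Proof.
have subF_map (b : ord) (F : finenum (ord_idx b)) :
    ord_subF F = map ord_sub (map (@fe_map _ F) (enum 'I_(fe_size F))).
  by rewrite /ord_subF -map_comp.
split.
  elim=> [|b L' S' xs _ [c <-]]; first by exists tt.
  exists (FinEnum (tnth (in_tuple xs)), c).
  by rewrite /= subF_map /= map_tnth_enum.
case=> c <-; elim: L c => [|b L IH] c; first by constructor.
by case: c => F c /=; rewrite subF_map; constructor.
Qed.

Lemma subchoice_nonemptyE (L : seq ord) (c : subchoice L) :
  subchoice_nonempty c <-> subselect c <> [::].
Proof.
elim: L c => [|b L IH] c; first by split.
case: c => F c /=; rewrite IH !neq_nil_size size_cat size_map size_enum_ord addn_gt0.
exact: rwP orP.
Qed.

Definition sel_lt (a : ord) (L : seq ord) :=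
  exists S, [/\ selection L S, S <> [::] & ord_le a S].

Lemma ord_ltE a L : ord_lt a L <-> sel_lt a L.
Proof.
split=> [[c [c_ne le_a]] | [S [/selectionP [c <-] S_ne le_a]]].
  exists (subselect c); split; last exact: le_a.
    by apply/selectionP; exists c.
  exact/subchoice_nonemptyE.
by exists c; split=> //; apply/subchoice_nonemptyE.
Qed.

Lemma ord_leE a L : ord_le a L <-> forall x : ord_idx a, sel_lt (ord_sub x) L.
Proof.
case: a => [|J f] /=; first by split=> // _ [].
by split=> le_f x; apply/ord_ltE; exact: le_f.
Qed.

Lemma sel_lt_nil (a : ord) : ~ sel_lt a [::].
Proof. by case=> S [/selection_nil_inv]. Qed.

Lemma ord_sub_ind (P : ord -> Prop) :
  (forall a, (forall x : ord_idx a, P (ord_sub x)) -> P a) -> forall a, P a.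
Proof. by move=> IH; elim=> [|J f IHf]; apply: IH; [case | exact: IHf]. Qed.

Lemma le_incl (a : ord) (L M : seq ord) : ord_le a L -> incl L M -> ord_le a M.
Proof.
elim/ord_sub_ind: a L M => a IH L M /ord_leE le_a inclLM; apply/ord_leE => x.
have [S [selS S_ne le_x]] := le_a x.
have [S' selS' inclS] := selection_incl selS inclLM.
by exists S'; split; [| exact: incl_neq_nil inclS S_ne | exact: IH le_x inclS].
Qed.

Lemma sel_lt_collect L Q : (forall q, In q Q -> sel_lt q L) ->
  exists2 S, selection L S & forall q, In q Q -> ord_le q S /\ S <> [::].
Proof.
move=> lt_Q; apply: selection_collect => [q S S' [le_q S_ne] inclS | q].
  by split; [exact: le_incl le_q inclS | exact: incl_neq_nil inclS S_ne].
by case/lt_Q => S [selS S_ne le_q]; exists S.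
Qed.

Lemma le_subst (a : ord) (D L N : seq ord) :
  ord_le a (D ++ L) -> (forall d, In d D -> ord_le d N) -> ord_le a (N ++ L).
Proof.
elim/ord_sub_ind: a D L N => a IH D L N /ord_leE le_a le_D; apply/ord_leE => x.
have [_ [/selection_cat_inv [SD [SL [selSD selSL ->]]] S_ne le_x]] := le_a x.
have lt_SD t : In t SD -> sel_lt t N.
  by case/(selection_In selSD) => d d_D [y ->]; exact: (ord_leE _ _).1 (le_D d d_D) y.
have [U selU le_SD] := sel_lt_collect lt_SD.
exists (U ++ SL); split; first exact: selection_cat.
  case: SD {selSD le_x lt_SD} le_SD S_ne => [_ | t SD le_SD _].
    exact/incl_neq_nil/List.incl_appr/List.incl_refl.
  by case: (le_SD t (or_introl erefl)) => _; case: U {selU le_SD}.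
by apply: IH le_x _ => t /le_SD [].
Qed.

Lemma ord_sub_le (a : ord) (x : ord_idx a) : ord_le (ord_sub x) [:: a].
Proof.
elim/ord_sub_ind: a x => a IH x; apply/ord_leE => z.
exists [:: ord_sub x]; split; [| by [] | exact: IH].
exact: (@selection_cons a [::] [::] [:: x] selection_nil).
Qed.

Lemma selection_le M S s : selection M S -> In s S -> ord_le s M.
Proof.
move=> selS /(selection_In selS) [b b_M [x ->]].
exact: le_incl (ord_sub_le x) (List.incl_cons b_M (List.incl_nil_l M)).
Qed.

Lemma le_cat_selection (a : ord) (L S M : seq ord) :
  ord_le a (L ++ S) -> selection M S -> ord_le a (L ++ M).
Proof.
move=> le_a selS; have le_a' := le_incl le_a (@incl_catC _ L S).
exact: le_incl (le_subst le_a' (fun s => selection_le selS)) (@incl_catC _ M L).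
Qed.

Definition strict_selection (T L : seq ord) := selection L T /\ T <> [::].

Local Notation acc := (Acc strict_selection).

Lemma acc_nil : acc [::].
Proof. by constructor=> T [/selection_nil_inv]. Qed.

Lemma acc_selection L T : acc L -> selection L T -> acc T.
Proof.
by case: T => [|t T] accL selT; [exact: acc_nil | exact: Acc_inv accL _ (conj selT _)].
Qed.

Lemma acc_cat L1 L2 : acc L1 -> acc L2 -> acc (L1 ++ L2).
Proof.
move=> acc1; elim: acc1 L2 => {}L1 _ IH1 L2 acc2.
constructor=> _ [/selection_cat_inv [T1 [T2 [sel1 sel2 ->]]] T_ne].
case: T1 sel1 T_ne => [|t T1] sel1 T_ne; first exact: Acc_inv acc2 _ (conj sel2 T_ne).
exact: IH1 (acc_selection acc2 sel2).
Qed.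

Lemma acc_single (a : ord) : acc [:: a].
Proof.
elim/ord_sub_ind: a => a IH.
constructor=> _ [/selection_cons_inv [xs [T [/selection_nil_inv -> ->]]] _].
rewrite cats0; elim: xs => [|x xs IHxs]; [exact: acc_nil | exact: acc_cat (IH x) IHxs].
Qed.

Lemma strict_selection_wf : well_founded strict_selection.
Proof. by elim=> [|a L IH]; [exact: acc_nil | exact: acc_cat (acc_single a) IH]. Qed.

Lemma le_selection_cat_elim (A P B : seq ord) : selection A P ->
  (forall a, In a A -> ord_le a (P ++ B)) -> forall a, In a A -> ord_le a B.
Proof.
elim: (strict_selection_wf A) P => {}A _ IH P selP le_A a a_A.
case: P selP le_A => [|p P] selP le_A; first exact: le_A.
have lt_P q : In q (p :: P) -> exists2 S, selection (p :: P) S & ord_le q (S ++ B).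
  case/(selection_In selP) => a' a'_A [y ->].
  have [_ [/selection_cat_inv [TP [TB [selTP selTB ->]]] _ le_y]] :=
    (ord_leE _ _).1 (le_A a' a'_A) y.
  by exists TP => //; exact: le_cat_selection le_y selTB.
have le_catr q S S' : ord_le q (S ++ B) -> incl S S' -> ord_le q (S' ++ B).
  by move=> le_q inclS; exact: le_incl le_q (List.incl_app_app inclS (List.incl_refl B)).
have [P' selP' le_P] := selection_collect le_catr lt_P.
have le_PB : forall q, In q (p :: P) -> ord_le q B by apply: IH selP' le_P; split.
apply: le_incl (le_subst (le_A a a_A) le_PB) _.
exact: List.incl_app (List.incl_refl B) (List.incl_refl B).
Qed.

Lemma lt_cat_elim (A B : seq ord) :
  (forall a, In a A -> sel_lt a (A ++ B)) -> forall a, In a A -> sel_lt a B.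
Proof.
move=> lt_A.
have [_ /selection_cat_inv [P [BS [selP selBS ->]]] le_A] := sel_lt_collect lt_A.
have le_B := le_selection_cat_elim selP (fun a a_A => (le_A a a_A).1).
case: BS selBS le_A le_B => [|b BS] selBS le_A le_B a a_A; last first.
  by exists (b :: BS); split=> //; exact: le_B.
have P_ne : P <> [::] by rewrite -[P]cats0; exact: (le_A a a_A).2.
case: P P_ne selP {le_A} => [//|p P] _ selP.
have [a' a'_A [y _]] := selection_In selP (or_introl erefl).
by case/sel_lt_nil: ((ord_leE _ _).1 (le_B a' a'_A) y).
Qed.

End OrdLe.

Theorem lemma4p6 (FF : IndexFamily) (alphas betas : seq (ord FF)) :
  0 < size alphas -> 0 < size betas ->
  ((forall i, i < size alphas -> ord_lt (nth (ordZ FF) alphas i) (alphas ++ betas)) ->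
     forall i, i < size alphas -> ord_lt (nth (ordZ FF) alphas i) betas)
  /\
  (forall Fs : subchoice alphas,
     (forall i, i < size alphas ->
        ord_le (nth (ordZ FF) alphas i) (subselect Fs ++ betas)) ->
     forall i, i < size alphas -> ord_le (nth (ordZ FF) alphas i) betas).
Proof.
move=> _ _; split.
  move=> /(forall_nthP _ _ (fun a => ord_lt a (alphas ++ betas))) lt_alphas.
  apply/(forall_nthP _ _ (fun a => ord_lt a betas)) => a a_alphas.
  by apply/ord_ltE; apply: lt_cat_elim a_alphas => b /lt_alphas /ord_ltE.
move=> Fs /(forall_nthP _ _ (fun a => ord_le a (subselect Fs ++ betas))) le_alphas.
apply/(forall_nthP _ _ (fun a => ord_le a betas)).
by apply: le_selection_cat_elim le_alphas; apply/selectionP; exists Fs.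
Qed.
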